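(* Let $q=2^m$ with $m\ge 2$, and let $k$ be an integer with $1\le k\le q+1$ such that $\mathrm{Tr}_{q^2/q}(\mathcal C_{\{3,5\}})$ contains a codeword of weight $k$. Then $\mathcal B_k(\mathrm{Tr}_{q^2/q}(\mathcal C_{\{3,5\}}))$ is invariant under the action of $\mathrm{Stab}_{U_{q+1}}$, i.e. $\pi(B)\in \mathcal B_k(\mathrm{Tr}_{q^2/q}(\mathcal C_{\{3,5\}}))$ for every block $B$ in it and every $\pi\in\mathrm{Stab}_{U_{q+1}}$. In particular, if $k>3$, the incidence structure $(U_{q+1},\mathcal B_k(\mathrm{Tr}_{q^2/q}(\mathcal C_{\{3,5\}})))$ is a $3$-design.
   Context: $U_{q+1}$ is the set of $(q+1)$-th roots of unity in $\mathrm{GF}(q^2)$, viewed as a subset of the projective line $\mathrm{PG}(1,q^2)=\mathrm{GF}(q^2)\cup\{\infty\}$; coordinates are indexed by $U_{q+1}$. $\mathrm{Stab}_{U_{q+1}}$ is the setwise stabilizer of $U_{q+1}$ in $\mathrm{PGL}_2(\mathrm{GF}(q^2))$ acting on $\mathrm{PG}(1,q^2)$ by linear fractional transformations $x\mapsto\frac{ax+b}{cx+d}$. $\mathcal C_{\{3,5\}}=\{(a_3u^3+a_{q-2}u^{q-2}+a_5u^5+a_{q-4}u^{q-4})_{u\in U_{q+1}}: a_i\in\mathrm{GF}(q^2)\}$; $\mathrm{Tr}_{q^2/q}(\mathcal C)$ is obtained by applying $\mathrm{Tr}_{q^2/q}(x)=x+x^q$ coordinatewise to all codewords. For a code $\mathcal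 C$, $\mathcal B_k(\mathcal C)$ is the set of supports $\{u: c_u\neq0\}$ of the codewords of Hamming weight $k$. A $3$-design is a pair (point set, set of $k$-subsets called blocks) such that every $3$ points lie in the same positive number $\lambda$ of blocks. *)

From mathcomp Require Import all_boot all_order all_algebra all_field.
Set Implicit Arguments. Unset Strict Implicit. Unset Printing Implicit Defensive.
Import GRing.Theory.
Local Open Scope ring_scope.

(* F plays the role of GF(q^2); q is given explicitly. *)

Definition Uroots (F : finFieldType) (q : nat) : {set F} :=
  [set u : F | u ^+ q.+1 == 1].

Definition trq (F : finFieldType) (q : nat) (x : F) : F := x + x ^+ q.

(* Coordinate u of the codeword of Tr(C_{3,5}) given by coefficients
   a = (a_3, a_{q-2}, a_5, a_{q-4}). *)
Definition cw35 (F : finFieldType) (q : nat) (a : F * F * F * F) (u : F) : F :=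
  let: (a3, aq2, a5, aq4) := a in
  trq q (a3 * u ^+ 3 + aq2 * u ^+ (q - 2) + a5 * u ^+ 5 + aq4 * u ^+ (q - 4)).

Definition supp35 (F : finFieldType) (q : nat) (a : F * F * F * F) : {set F} :=
  [set u in Uroots F q | cw35 q a u != 0].

Definition blocks35 (F : finFieldType) (q k : nat) : {set {set F}} :=
  [set B : {set F} | (#|B| == k) && [exists a : F * F * F * F, B == supp35 q a]].

(* pi : x |-> (a x + b)/(c x + d) in PGL_2(F) lies in the setwise stabilizer of
   U_{q+1} (subset of PG(1,F) not containing infinity): pi is nondegenerate and
   maps every point of U to a finite point of U.  Since pi is a bijection of the
   projective line and U is finite, pi(U) <= U is equivalent to pi(U) = U. *)
Definition in_stabU (F : finFieldType) (q : nat) (a b c d : F) : Prop :=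
  a * d - b * c != 0 /\
  forall u, u \in Uroots F q -> c * u + d != 0 /\ (a * u + b) / (c * u + d) \in Uroots F q.

Definition mobius_img (F : finFieldType) (a b c d : F) (B : {set F}) : {set F} :=
  [set (a * u + b) / (c * u + d) | u in B].

Definition is_3design (F : finFieldType) (P : {set F}) (Bs : {set {set F}}) : Prop :=
  (forall B, B \in Bs -> B \subset P) /\
  exists lam : nat, (0 < lam)%N /\
    forall T : {set F}, T \subset P -> #|T| = 3 ->
      #|[set B in Bs | T \subset B]| = lam.

(* On U = U_{q+1} we have u^q = u^-1, so the codeword with coefficients
   (a3, a_{q-2}, a5, a_{q-4}) is u |-> Tr(b3 u^3 + b5 u^5), b3 = a3 + a_{q-2}^q,
   b5 = a5 + a_{q-4}^q.  If pi(u) = N/D with N = a u + b, D = c u + d stabilises U,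
   the Frobenius image of its matrix is proportional to its adjugate, so
   N D / (u det) lies in GF(q).  In characteristic 2, (N D)^5 Tr(b3 v^3 + b5 v^5) at
   v = N/D is a polynomial in u with exponents 0, 2, 8, 10, i.e. u^5 times a Laurent
   polynomial of the original shape; scaled by an element of nonzero trace it gives a
   codeword whose support is the preimage under pi of the original support.  Hence
   the stabiliser permutes the blocks of each weight.  It is also 3-transitive on U
   (cross ratios send U minus a point onto GF(q)), so every 3-subset of U lies in the
   same number of blocks. *)

From mathcomp Require Import all_boot all_order all_algebra all_field.
From mathcomp Require Import cyclic.
From mathcomp Require Import ring zify.
Set Implicit Arguments. Unset Strict Implicit. Unset Printing Implicit Defensive.
Import GRing.Theory.
Local Open Scope ring_scope.

Lemma cards3P (T : finType) (A : {set T}) :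
  reflect (exists x y z, [/\ x != y, y != z & z != x] /\ A = [set x; y; z])
          (#|A| == 3%N).
Proof.
apply: (iffP eqP) => [cardA | [x [y [z [[xy yz zx] ->]]]]].
  have /card_gt2P [x [y [z [[xA yA zA] neq]]]] : (2 < #|A|)%N by rewrite cardA.
  exists x, y, z; split=> //; apply/esym/eqP; rewrite eqEcard cardA.
  apply/andP; split.
    by apply/subsetP => w; rewrite !inE => /orP [/orP [] |] /eqP ->.
  by apply/card_gt2P; exists x, y, z; rewrite !inE !eqxx ?orbT.
by rewrite -setUA !cardsU1 cards1 !inE negb_or xy yz eq_sym zx.
Qed.

Section SelfMapOfSubset.

Variables (T : finType) (f : T -> T) (U : {set T}).
Hypotheses (f_inj : {in U &, injective f}) (f_U : {in U, forall u, f u \in U}).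

Lemma preim_imset {B : {set T}} : B \subset U -> [set u in U | f u \in f @: B] = B.
Proof.
move=> sBU; apply/setP => u; rewrite inE; apply/andP/idP => [[uU /imsetP [v vB]]|uB].
  by move/f_inj => -> //; apply: (subsetP sBU).
by rewrite imset_f // (subsetP sBU).
Qed.

Lemma imset_in_inj (B1 B2 : {set T}) :
  B1 \subset U -> B2 \subset U -> f @: B1 = f @: B2 -> B1 = B2.
Proof. by move=> sB1 sB2 eqB; rewrite -(preim_imset sB1) -(preim_imset sB2) eqB. Qed.

Lemma imset_preim {B : {set T}} : B \subset U -> f @: [set u in U | f u \in B] = B.
Proof.
move=> sBU; have fUU : f @: U = U.
  apply/eqP; rewrite eqEcard card_in_imset // leqnn andbT.
  by apply/subsetP => _ /imsetP [u uU ->]; apply: f_U.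
apply/setP => v; apply/imsetP/idP => [[u] | vB].
  by rewrite inE => /andP [_ fuB] ->.
have := subsetP sBU v vB; rewrite -{1}fUU => /imsetP [u uU vE].
by exists u; rewrite // inE uU -vE.
Qed.

Lemma imset_closed_of_preim_closed (Bs : {set {set T}}) :
  {in Bs, forall B : {set T}, B \subset U} ->
  {in Bs, forall B : {set T}, [set u in U | f u \in B] \in Bs} ->
  {in Bs, forall B : {set T}, f @: B \in Bs}.
Proof.
move=> sBsU preimBs; pose preim (B : {set T}) := [set u in U | f u \in B].
have preim_inj : {in Bs &, injective preim}.
  move=> B1 B2 /sBsU sB1 /sBsU sB2 eqB.
  by rewrite -(imset_preim sB1) -(imset_preim sB2) -/(preim B1) eqB.
have preimBsE : preim @: Bs = Bs.
  apply/eqP; rewrite eqEcard card_in_imset // leqnn andbT.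
  by apply/subsetP => _ /imsetP [B BBs ->]; apply: preimBs.
move=> B; rewrite -{1}preimBsE => /imsetP [B' B'Bs ->].
by rewrite imset_preim ?sBsU.
Qed.

Lemma card_preim {B : {set T}} : B \subset U -> #|[set u in U | f u \in B]| = #|B|.
Proof.
move=> sBU; rewrite -{2}(imset_preim sBU) card_in_imset //.
by apply: sub_in2 f_inj => u; rewrite inE => /andP [].
Qed.

Lemma card_blocks_through_le (Bs : {set {set T}}) (T1 T2 : {set T}) :
  {in Bs, forall B : {set T}, B \subset U} -> {in Bs, forall B : {set T}, f @: B \in Bs} ->
  f @: T1 = T2 ->
  (#|[set B in Bs | T1 \subset B]| <= #|[set B in Bs | T2 \subset B]|)%N.
Proof.
move=> sBsU fBs fT12; rewrite -(@card_in_imset _ _ (fun B : {set T} => f @: B)).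
  apply: subset_leq_card; apply/subsetP => _ /imsetP [B /setIdP [BBs sT1B] ->].
  by rewrite inE fBs // -fT12 imsetS.
by move=> B1 B2 /setIdP [/sBsU sB1 _] /setIdP [/sBsU sB2 _]; apply: imset_in_inj.
Qed.

End SelfMapOfSubset.

Lemma quadratic_coefs_eq0 (F : fieldType) (e2 e1 e0 x1 x2 x3 : F) :
  [/\ x1 != x2, x2 != x3 & x3 != x1] ->
  e2 * x1 ^+ 2 + e1 * x1 + e0 = 0 -> e2 * x2 ^+ 2 + e1 * x2 + e0 = 0 ->
  e2 * x3 ^+ 2 + e1 * x3 + e0 = 0 -> [/\ e2 = 0, e1 = 0 & e0 = 0].
Proof.
move=> [x12 x23 x31] r1 r2 r3.
have slope (y z : F) : y != z -> e2 * y ^+ 2 + e1 * y + e0 = 0 ->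
    e2 * z ^+ 2 + e1 * z + e0 = 0 -> e2 * (y + z) + e1 = 0.
  move=> yz ry rz; have : (y - z) * (e2 * (y + z) + e1) = 0.
    by rewrite -[RHS](subrr 0) -{1}ry -rz; ring.
  by move/eqP; rewrite mulf_eq0 subr_eq0 (negbTE yz) => /eqP.
have s12 := slope _ _ x12 r1 r2; have s23 := slope _ _ x23 r2 r3.
have e2_0 : e2 = 0.
  have : (x1 - x3) * e2 = 0 by rewrite -[RHS](subrr 0) -{1}s12 -s23; ring.
  by move/eqP; rewrite mulf_eq0 subr_eq0 eq_sym (negbTE x31) => /eqP.
have e1_0 : e1 = 0 by move: s12; rewrite e2_0 mul0r add0r.
by split=> //; move: r1; rewrite e2_0 e1_0 !mul0r !add0r.
Qed.

Section UnitCircle.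

Variables (F : finFieldType) (p e : nat).

Local Notation q := (p ^ e)%N.
Local Notation U := (Uroots F q).
Local Notation mobius a b c d := (fun u : F => (a * u + b) / (c * u + d)).

Lemma Uroots_neq0 (u : F) : u \in U -> u != 0.
Proof. by rewrite inE; apply: contraTneq => ->; rewrite exprS mul0r eq_sym oner_eq0. Qed.

Lemma Uroots_frob (u : F) : u \in U -> u ^+ q = u^-1.
Proof.
move=> uU; apply: (mulfI (Uroots_neq0 uU)); rewrite divff ?Uroots_neq0 // -exprS.
by move: uU; rewrite inE => /eqP.
Qed.

Lemma Uroots_expB (u : F) k : u \in U -> (k <= q)%N -> u ^+ (q - k) = u ^- k.+1.
Proof.
move=> uU le_kq; apply: (mulIf (expf_neq0 k.+1 (Uroots_neq0 uU))).
rewrite -exprD addnS subnK // mulVf ?expf_neq0 ?Uroots_neq0 //.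
by move: uU; rewrite inE => /eqP.
Qed.

Hypothesis cardF : #|F| = ((p ^ e) ^ 2)%N.

Lemma frobqK (x : F) : (x ^+ q) ^+ q = x.
Proof. by rewrite -exprM mulnn -cardF expf_card. Qed.

Lemma card_Uroots_geq : (q.+1 <= #|U|)%N.
Proof.
have q_gt1 : (1 < q)%N by have := finNzRing_gt1 F; rewrite cardF -mulnn; nia.
pose n := #|F|.-1.
have n_gt0 : (0 < n)%N by rewrite /n cardF; nia.
have : has n.-primitive_root (enum [pred x : F | x != 0]).
  apply: has_prim_root => //; last by rewrite -cardE cardC1.
  - apply/allP => x; rewrite mem_enum inE => x_neq0; rewrite unity_rootE.
    apply/eqP; apply: (mulIf x_neq0).
    by rewrite mul1r -exprSr /n prednK ?expf_card // (ltnW (finNzRing_gt1 F)).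
  - exact: enum_uniq.
case/hasP => z _ z_prim.
pose g (i : 'I_q.+1) := z ^+ (i * q.-1).
have g_inj : injective g.
  move=> i j /eqP; rewrite (eq_prim_root_expr z_prim) !modn_small /n ?cardF.
  - by rewrite eqn_pmul2r -?subn1 ?subn_gt0 // => /eqP /val_inj.
  - by have := ltn_ord j; nia.
  - by have := ltn_ord i; nia.
rewrite -{1}[q.+1]card_ord -(card_imset _ g_inj); apply: subset_leq_card.
apply/subsetP => _ /imsetP [i _ ->]; rewrite inE -exprM -mulnA.
have -> : (q.-1 * q.+1 = n)%N by rewrite /n cardF; nia.
by rewrite mulnC exprM (prim_expr_order z_prim) expr1n.
Qed.

Hypothesis pcharF : p \in [pchar F].

Let pnat_q : [pchar F].-nat q.
Proof.
by rewrite (eq_pnat _ (pcharf_eq pcharF)) pnatX pnat_id ?(pcharf_prime pcharF).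
Qed.

Lemma frobqD (x y : F) : (x + y) ^+ q = x ^+ q + y ^+ q.
Proof. exact: exprDn_pchar pnat_q. Qed.

Lemma frobqB (x y : F) : (x - y) ^+ q = x ^+ q - y ^+ q.
Proof. by rewrite frobqD (exprNn_pchar _ pnat_q). Qed.

Lemma Uroots_frobB (z w : F) : z \in U -> w \in U -> (z - w) ^+ q = (w - z) / (z * w).
Proof.
move=> zU wU; rewrite frobqB !Uroots_frob //; field.
by rewrite !Uroots_neq0.
Qed.

Lemma stabU_injective (a b c d : F) :
  in_stabU q a b c d -> {in U &, injective (mobius a b c d)}.
Proof.
case=> det_neq0 stabU u v uU vU /= eq_uv.
have [[Du_neq0 _] [Dv_neq0 _]] := (stabU u uU, stabU v vU).
have : (a * d - b * c) * (u - v) = 0.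
  have -> : (a * d - b * c) * (u - v) = ((a * u + b) / (c * u + d)
      - (a * v + b) / (c * v + d)) * ((c * u + d) * (c * v + d)).
    by field; rewrite Du_neq0 Dv_neq0.
  by rewrite eq_uv subrr mul0r.
by move/eqP; rewrite mulf_eq0 (negbTE det_neq0) subr_eq0 => /eqP.
Qed.

Lemma Uroots_norm_affine (a b u : F) : u \in U ->
  u * (a * u + b) ^+ q.+1
  = a * b ^+ q * u ^+ 2 + (a * a ^+ q + b * b ^+ q) * u + a ^+ q * b.
Proof.
by move=> uU; rewrite exprSr frobqD exprMn (Uroots_frob uU); field; rewrite Uroots_neq0.
Qed.

Lemma stabU_hermitian (a b c d : F) : in_stabU q a b c d ->
  [/\ a * b ^+ q = c * d ^+ q,
      a * a ^+ q + b * b ^+ q = c * c ^+ q + d * d ^+ q &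
      a ^+ q * b = c ^+ q * d].
Proof.
case=> _ stabU.
have quad_eq0 u : u \in U ->
    (a * b ^+ q - c * d ^+ q) * u ^+ 2
    + (a * a ^+ q + b * b ^+ q - (c * c ^+ q + d * d ^+ q)) * u
    + (a ^+ q * b - c ^+ q * d) = 0.
  move=> uU; have [D_neq0 vU] := stabU u uU.
  have normE : u * (a * u + b) ^+ q.+1 = u * (c * u + d) ^+ q.+1.
    by move: vU; rewrite inE expr_div_n => /eqP /divr1_eq ->.
  by move/eqP: normE; rewrite -subr_eq0 !Uroots_norm_affine // => /eqP <-; ring.
have /card_gt2P [x1 [x2 [x3 [[x1U x2U x3U] neq]]]] : (2 < #|U|)%N.
  by apply: leq_trans card_Uroots_geq; have := finNzRing_gt1 F; rewrite cardF -mulnn; nia.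
have [E2 E1 E0] := quadratic_coefs_eq0 neq (quad_eq0 _ x1U) (quad_eq0 _ x2U) (quad_eq0 _ x3U).
by split; apply: subr0_eq.
Qed.

(* With M the matrix of the map, J = diag(1, -1) and M^* the transpose of the
   Frobenius image of M, the three relations read M^* J M = lambda J; hence
   M^* J = lambda J M^-1, whose entries are the four identities below. *)
Lemma stabU_frob_adj (a b c d : F) : in_stabU q a b c d ->
  exists2 mu, mu != 0 &
    [/\ a ^+ q = mu * d, b ^+ q = mu * c, c ^+ q = mu * b & d ^+ q = mu * a].
Proof.
move=> stab; have [det_neq0 _] := stab.
have [E1 E2 E3] := stabU_hermitian stab.
have E2' : b * b ^+ q = c * c ^+ q + d * d ^+ q - a * a ^+ q by rewrite -E2; ring.
have E2'' : d * d ^+ q = a * a ^+ q + b * b ^+ q - c * c ^+ q by rewrite E2; ring.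
pose mu := (a * a ^+ q - c * c ^+ q) / (a * d - b * c).
have mulE x y : x = mu * y <-> x * (a * d - b * c) = (a * a ^+ q - c * c ^+ q) * y.
  by rewrite /mu mulrAC; split=> [-> | /(canRL (mulfK det_neq0))]; rewrite ?mulfVK.
have Ea : a ^+ q = mu * d.
  apply/mulE; have -> : a ^+ q * (a * d - b * c) = a * a ^+ q * d - c * (a ^+ q * b) by ring.
  by rewrite E3; ring.
have Eb : b ^+ q = mu * c.
  apply/mulE; have -> : b ^+ q * (a * d - b * c) = d * (a * b ^+ q) - c * (b * b ^+ q) by ring.
  by rewrite E1 E2'; ring.
have Ec : c ^+ q = mu * b.
  apply/mulE; have -> : c ^+ q * (a * d - b * c) = a * (c ^+ q * d) - b * c * c ^+ q by ring.
  by rewrite -E3; ring.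
have Ed : d ^+ q = mu * a.
  apply/mulE; have -> : d ^+ q * (a * d - b * c) = a * (d * d ^+ q) - b * (c * d ^+ q) by ring.
  by rewrite -E1 E2''; ring.
exists mu; last by [].
apply/eqP => mu0; move: (expf_neq0 q det_neq0).
by rewrite frobqB !exprMn Ea Eb Ec Ed mu0 !mul0r subrr eqxx.
Qed.

Lemma stabU_factor_frob (a b c d u : F) : in_stabU q a b c d -> u \in U ->
  ((a * u + b) * (c * u + d) / (u * (a * d - b * c))) ^+ q
  = (a * u + b) * (c * u + d) / (u * (a * d - b * c)).
Proof.
move=> stab uU; have [det_neq0 _] := stab.
have [mu mu_neq0 [Ea Eb Ec Ed]] := stabU_frob_adj stab.
have detE : (a * d - b * c) ^+ q = mu ^+ 2 * (a * d - b * c).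
  by rewrite frobqB !exprMn Ea Eb Ec Ed; ring.
rewrite !exprMn exprVn !exprMn detE !frobqD !exprMn (Uroots_frob uU) Ea Eb Ec Ed.
by field; rewrite mu_neq0 det_neq0 Uroots_neq0.
Qed.

Lemma cross_ratio_frob (x1 x2 x3 u : F) :
  x1 \in U -> x2 \in U -> x3 \in U -> u \in U -> x2 != x1 -> u != x3 ->
  let t := (x2 - x3) * (u - x1) / ((x2 - x1) * (u - x3)) in t ^+ q = t.
Proof.
move=> x1U x2U x3U uU x21 ux3 /=.
rewrite !exprMn exprVn !exprMn !Uroots_frobB //; field.
by rewrite !subr_eq0 (eq_sym x3 u) (eq_sym x1 x2) ux3 x21 !Uroots_neq0.
Qed.

Lemma Uroots_param (y1 y2 y3 t : F) :
  y1 \in U -> y2 \in U -> y3 \in U -> y2 != y3 -> y3 != y1 -> t ^+ q = t ->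
  let Y := (y2 - y1) * t - (y2 - y3) in
  Y != 0 /\ ((y2 - y1) * y3 * t - (y2 - y3) * y1) / Y \in U.
Proof.
move=> y1U y2U y3U y23 y31 tq Y; set X := _ * t - _.
have Xq : X ^+ q = - Y / (y1 * y2 * y3).
  rewrite frobqB !exprMn tq !Uroots_frobB // !Uroots_frob // /Y; field.
  by rewrite !Uroots_neq0.
have Yq : Y ^+ q = - X / (y1 * y2 * y3).
  rewrite frobqB !exprMn tq !Uroots_frobB // /X; field.
  by rewrite !Uroots_neq0.
have Y_neq0 : Y != 0.
  apply/eqP => Y0; have : X ^+ q != 0.
    have -> : X = (y2 - y3) * (y3 - y1) + y3 * Y by rewrite /X /Y; ring.
    by rewrite Y0 mulr0 addr0 expf_neq0 // mulf_neq0 // subr_eq0.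
  by rewrite Xq Y0 oppr0 mul0r eqxx.
have X_neq0 : X != 0.
  by apply/eqP => X0; move: (expf_neq0 q Y_neq0); rewrite Yq X0 oppr0 mul0r eqxx.
split=> //; rewrite inE exprSr expr_div_n Xq Yq; apply/eqP; field.
by rewrite oppr_eq0 X_neq0 Y_neq0 !Uroots_neq0.
Qed.

(* The map is Y^-1 o X, where X is the cross ratio sending x1, x2, x3 to 0, 1, oo
   and Y the one for y1, y2, y3: X sends U \ {x3} into GF(q), and Y^-1 sends GF(q)
   back into U (Uroots_param). *)
Lemma stabU_map3 (x1 x2 x3 y1 y2 y3 : F) :
  [/\ x1 \in U, x2 \in U & x3 \in U] -> [/\ x1 != x2, x2 != x3 & x3 != x1] ->
  [/\ y1 \in U, y2 \in U & y3 \in U] -> [/\ y1 != y2, y2 != y3 & y3 != y1] ->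
  exists a b c d, in_stabU q a b c d /\
    [/\ mobius a b c d x1 = y1, mobius a b c d x2 = y2 & mobius a b c d x3 = y3].
Proof.
move=> [x1U x2U x3U] [x12 x23 x31] [y1U y2U y3U] [y12 y23 y31].
have sub_neq0 (z w : F) : z != w -> z - w != 0 by rewrite subr_eq0.
have x21 : x2 != x1 by rewrite eq_sym.
pose P u := (x2 - x3) * (u - x1); pose R u := (x2 - x1) * (u - x3).
pose r := y2 - y1; pose s := y2 - y3.
pose a := r * y3 * (x2 - x3) - s * y1 * (x2 - x1).
pose b := s * y1 * (x2 - x1) * x3 - r * y3 * (x2 - x3) * x1.
pose c := r * (x2 - x3) - s * (x2 - x1).
pose d := s * (x2 - x1) * x3 - r * (x2 - x3) * x1.
have numE u : a * u + b = r * y3 * P u - s * y1 * R u by rewrite /a /b /P /R; ring.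
have denE u : c * u + d = r * P u - s * R u by rewrite /c /d /P /R; ring.
have [r_neq0 s_neq0] : r != 0 /\ s != 0 by rewrite !sub_neq0 // eq_sym.
have P3_neq0 : P x3 != 0 by rewrite mulf_neq0 ?sub_neq0 // eq_sym.
have R1_neq0 : R x1 != 0 by rewrite mulf_neq0 ?sub_neq0 // eq_sym.
have at_x3 : c * x3 + d != 0 /\ mobius a b c d x3 = y3.
  rewrite /= numE denE /R subrr !mulr0 !subr0 mulf_neq0 //.
  by split=> //; field; rewrite r_neq0 P3_neq0.
exists a, b, c, d; split; first split.
- have -> : a * d - b * c = r * s * (y1 - y3) * ((x2 - x3) * (x2 - x1) * (x1 - x3)).
    by rewrite /a /b /c /d; ring.
  by rewrite !mulf_neq0 ?sub_neq0 // eq_sym.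
- move=> u uU; have [-> | ux3] := eqVneq u x3; first by case: at_x3 => D3_neq0 ->.
  pose t := P u / R u.
  have tq : t ^+ q = t := cross_ratio_frob x1U x2U x3U uU x21 ux3.
  have Ru_neq0 : R u != 0 by rewrite mulf_neq0 ?sub_neq0.
  have [Y_neq0 XY_U] := Uroots_param y1U y2U y3U y23 y31 tq.
  have -> : a * u + b = R u * (r * y3 * t - s * y1) by rewrite numE /t; field.
  have -> : c * u + d = R u * (r * t - s) by rewrite denE /t; field.
  by rewrite mulf_neq0 // -mulf_div divff // mul1r.
- split; last exact: (proj2 at_x3).
  + rewrite /= numE denE; have -> : P x1 = 0 by rewrite /P subrr mulr0.
    by rewrite !mulr0 !sub0r; field; rewrite oppr_eq0 mulf_neq0.
  + rewrite /= numE denE; have -> : P x2 = R x2 by rewrite /P /R mulrC.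
    rewrite -!mulrBl /r /s; field.
    have -> : y2 - y1 - (y2 - y3) = y3 - y1 by ring.
    by rewrite !mulf_neq0 ?sub_neq0.
Qed.

Lemma stabU_transitive3 (T1 T2 : {set F}) :
  T1 \subset U -> #|T1| = 3%N -> T2 \subset U -> #|T2| = 3%N ->
  exists a b c d, in_stabU q a b c d /\ mobius_img a b c d T1 = T2.
Proof.
move=> sT1U /eqP/cards3P [x1 [x2 [x3 [x_neq T1E]]]].
move=> sT2U /eqP/cards3P [y1 [y2 [y3 [y_neq T2E]]]]; subst T1 T2.
have xU : [/\ x1 \in U, x2 \in U & x3 \in U].
  by split; apply: (subsetP sT1U); rewrite !inE eqxx ?orbT.
have yU : [/\ y1 \in U, y2 \in U & y3 \in U].
  by split; apply: (subsetP sT2U); rewrite !inE eqxx ?orbT.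
have [a [b [c [d [stab [e1 e2 e3]]]]]] := stabU_map3 xU x_neq yU y_neq.
by exists a, b, c, d; rewrite /mobius_img !imsetU !imset_set1 e1 e2 e3.
Qed.

End UnitCircle.

Definition c35 (F : finFieldType) (q : nat) (a : F * F * F * F) (u : F) : F :=
  let: (a3, aq2, a5, aq4) := a in
  a3 * u ^+ 3 + aq2 * u ^+ (q - 2) + a5 * u ^+ 5 + aq4 * u ^+ (q - 4).

Lemma cw35E (F : finFieldType) q (a : F * F * F * F) u : cw35 q a u = trq q (c35 q a u).
Proof. by case: a => [[[a3 aq2] a5] aq4]. Qed.

Lemma in_supp35 (F : finFieldType) q (a : F * F * F * F) u :
  (u \in supp35 q a) = (u \in Uroots F q) && (cw35 q a u != 0).
Proof. by rewrite inE. Qed.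

Lemma blocks35_sub (F : finFieldType) q k (B : {set F}) :
  B \in blocks35 F q k -> B \subset Uroots F q.
Proof.
rewrite inE => /andP [_ /existsP [a /eqP ->]].
by apply/subsetP => u; rewrite inE => /andP [].
Qed.

Section TraceCode.

Variables (F : finFieldType) (m : nat).
Hypotheses (pchar2 : 2 \in [pchar F]) (m_ge2 : (2 <= m)%N)
           (cardF : #|F| = ((2 ^ m) ^ 2)%N).

Local Notation q := (2 ^ m)%N.
Local Notation U := (Uroots F q).

Let q_ge4 : (4 <= q)%N.
Proof. by rewrite -[4%N]/(2 ^ 2)%N leq_exp2l. Qed.

Lemma cw35_Uroots (a3 aq2 a5 aq4 u : F) : u \in U ->
  cw35 q (a3, aq2, a5, aq4) u =
  (a3 + aq2 ^+ q) * u ^+ 3 + (a5 + aq4 ^+ q) * u ^+ 5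
  + (a3 + aq2 ^+ q) ^+ q * u ^- 3 + (a5 + aq4 ^+ q) ^+ q * u ^- 5.
Proof.
move=> uU.
have frobXn k x : (x * u ^+ k) ^+ q = x ^+ q * u ^- k.
  by rewrite exprMn exprAC (Uroots_frob uU) exprVn.
have frobXVn k x : (x * u ^- k) ^+ q = x ^+ q * u ^+ k.
  by rewrite exprMn exprVn exprAC (Uroots_frob uU) exprVn invrK.
rewrite /cw35 /trq !(Uroots_expB uU) ?(leq_trans _ q_ge4) //.
by rewrite !(frobqD m pchar2) !frobXn !frobXVn !(frobqK cardF); ring.
Qed.

Lemma trq_frob (x : F) : trq q x ^+ q = trq q x.
Proof. by rewrite /trq (frobqD m pchar2) (frobqK cardF) addrC. Qed.

Lemma exists_trq_neq0 : exists al : F, trq q al != 0.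
Proof.
have /card_gt1P [x [y [xU yU xy]]] : (1 < #|U|)%N.
  by apply: leq_trans (card_Uroots_geq cardF); rewrite ltnS expn_gt0.
have [z [zU z_neq1]] : exists z, z \in U /\ z != 1.
  by case: (eqVneq x 1) => [x1 | ]; [exists y; rewrite -x1 eq_sym | exists x].
have z_neq0 := Uroots_neq0 zU.
exists z; have -> : trq q z = (z + 1) ^+ 2 / z.
  by rewrite /trq (Uroots_frob zU) (frobqD 1 pchar2) expr1n; field.
by rewrite mulf_neq0 ?invr_eq0 // expf_neq0 // addr_eq0 (oppr_pchar2 pchar2).
Qed.

Lemma c35_mobius (a b c d s : F) (a' : F * F * F * F) :
  exists a'', forall u, u \in U -> c * u + d != 0 ->
    (a * u + b) / (c * u + d) \in U ->
    c35 q a'' u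
    = s * ((a * u + b) * (c * u + d) / u) ^+ 5 * cw35 q a' ((a * u + b) / (c * u + d)).
Proof.
case: a' => [[[a3 aq2] a5] aq4].
pose b3 := a3 + aq2 ^+ q; pose b5 := a5 + aq4 ^+ q.
pose f10 := b5 * a ^+ 10 + b3 * a ^+ 8 * c ^+ 2 + b3 ^+ q * a ^+ 2 * c ^+ 8 + b5 ^+ q * c ^+ 10.
pose f8 := b5 * a ^+ 8 * b ^+ 2 + b3 * a ^+ 8 * d ^+ 2 + b3 ^+ q * b ^+ 2 * c ^+ 8
           + b5 ^+ q * c ^+ 8 * d ^+ 2.
pose f2 := b5 * a ^+ 2 * b ^+ 8 + b3 * b ^+ 8 * c ^+ 2 + b3 ^+ q * a ^+ 2 * d ^+ 8
           + b5 ^+ q * c ^+ 2 * d ^+ 8.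
pose f0 := b5 * b ^+ 10 + b3 * b ^+ 8 * d ^+ 2 + b3 ^+ q * b ^+ 2 * d ^+ 8 + b5 ^+ q * d ^+ 10.
(* In characteristic 2, N^10, N^8 D^2, N^2 D^8 and D^10 (N = a u + b, D = c u + d)
   only involve u^10, u^8, u^2 and 1; f10, f8, f2, f0 collect these coefficients. *)
exists (s * f8, s * f2, s * f10, s * f0) => u uU.
set N := a * u + b; set D := c * u + d => D_neq0 vU.
have u_neq0 := Uroots_neq0 uU.
have /andP [N_neq0 _] : (N != 0) && (D^-1 != 0) by rewrite -negb_or -mulf_eq0 (Uroots_neq0 vU).
have polyE : b5 * N ^+ 10 + b3 * N ^+ 8 * D ^+ 2 + b3 ^+ q * N ^+ 2 * D ^+ 8 + b5 ^+ q * D ^+ 10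
    = f10 * u ^+ 10 + f8 * u ^+ 8 + f2 * u ^+ 2 + f0.
  have [N2 N8] : N ^+ 2 = (a * u) ^+ 2 + b ^+ 2 /\ N ^+ 8 = (a * u) ^+ 8 + b ^+ 8.
    by split; [apply: (frobqD 1 pchar2) | apply: (frobqD 3 pchar2)].
  have [D2 D8] : D ^+ 2 = (c * u) ^+ 2 + d ^+ 2 /\ D ^+ 8 = (c * u) ^+ 8 + d ^+ 8.
    by split; [apply: (frobqD 1 pchar2) | apply: (frobqD 3 pchar2)].
  rewrite (exprD N 8 2) (exprD D 8 2) N2 N8 D2 D8.
  by rewrite /f10 /f8 /f2 /f0; ring.
rewrite cw35_Uroots // -/b3 -/b5 -mulrA.
have -> : (N * D / u) ^+ 5 * (b3 * (N / D) ^+ 3 + b5 * (N / D) ^+ 5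
      + b3 ^+ q / (N / D) ^+ 3 + b5 ^+ q / (N / D) ^+ 5)
    = (b5 * N ^+ 10 + b3 * N ^+ 8 * D ^+ 2 + b3 ^+ q * N ^+ 2 * D ^+ 8 + b5 ^+ q * D ^+ 10)
      / u ^+ 5.
  by field; rewrite N_neq0 D_neq0 u_neq0.
rewrite polyE /c35 !(Uroots_expB uU) ?(leq_trans _ q_ge4) //.
by field.
Qed.

Lemma supp35_mobius (a b c d : F) (a' : F * F * F * F) : in_stabU q a b c d ->
  exists a'', supp35 q a'' = [set u in U | (a * u + b) / (c * u + d) \in supp35 q a'].
Proof.
move=> stab; have [det_neq0 stabU] := stab.
have [al trq_al] := exists_trq_neq0.
have [a'' a''E] := c35_mobius a b c d (al / (a * d - b * c) ^+ 5) a'.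
exists a''; apply/setP => u; rewrite in_supp35 in_set in_supp35.
have [uU | //] /= := boolP (u \in U).
have [D_neq0 vU] := stabU u uU; rewrite vU /=.
have /andP [N_neq0 _] : (a * u + b != 0) && ((c * u + d)^-1 != 0).
  by rewrite -negb_or -mulf_eq0 (Uroots_neq0 vU).
set r := (a * u + b) * (c * u + d) / (u * (a * d - b * c)).
have r_neq0 : r != 0 by rewrite !(mulf_neq0, invr_neq0) // (Uroots_neq0 uU).
set G := r ^+ 5 * cw35 q a' ((a * u + b) / (c * u + d)).
have c35E : c35 q a'' u = al * G.
  by rewrite a''E // /G /r; field; rewrite det_neq0 (Uroots_neq0 uU).
have Gq : G ^+ q = G.
  by rewrite /G exprMn exprAC (stabU_factor_frob cardF pchar2 stab uU) cw35E trq_frob.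
rewrite cw35E c35E /trq exprMn Gq -mulrDl mulf_eq0 negb_or trq_al /=.
by rewrite /G mulf_eq0 negb_or expf_neq0.
Qed.

Lemma blocks35_mobius k (a b c d : F) : in_stabU q a b c d ->
  {in blocks35 F q k, forall B, mobius_img a b c d B \in blocks35 F q k}.
Proof.
move=> stab; have [_ stabU] := stab.
have mobiusU : {in U, forall u, (a * u + b) / (c * u + d) \in U}.
  by move=> u /stabU [_].
apply: (imset_closed_of_preim_closed (stabU_injective stab) mobiusU).
  exact: blocks35_sub.
move=> B Bk; have sBU := blocks35_sub Bk.
move: Bk; rewrite inE => /andP [/eqP cardB /existsP [a' /eqP BE]].
have [a'' a''E] := supp35_mobius a' stab.
rewrite inE (card_preim (stabU_injective stab) mobiusU sBU) cardB eqxx /=.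
by apply/existsP; exists a''; rewrite a''E BE.
Qed.

Lemma blocks35_count_le k (T1 T2 : {set F}) :
  T1 \subset U -> #|T1| = 3%N -> T2 \subset U -> #|T2| = 3%N ->
  (#|[set B in blocks35 F q k | T1 \subset B]|
     <= #|[set B in blocks35 F q k | T2 \subset B]|)%N.
Proof.
move=> sT1U cardT1 sT2U cardT2.
have [a [b [c [d [stab T12]]]]] := stabU_transitive3 pchar2 sT1U cardT1 sT2U cardT2.
apply: (card_blocks_through_le (stabU_injective stab)) T12.
- exact: blocks35_sub.
- exact: blocks35_mobius.
Qed.

End TraceCode.

Theorem theorem23 (F : finFieldType) (m : nat) (hm : (2 <= m)%N)
    (hF : #|F| = ((2 ^ m) ^ 2)%N) (k : nat) (hk : (1 <= k <= (2 ^ m).+1)%N)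
    (hex : exists B, B \in blocks35 F (2 ^ m) k) :
  (forall (a b c d : F), in_stabU (2 ^ m) a b c d ->
     forall B, B \in blocks35 F (2 ^ m) k ->
       mobius_img a b c d B \in blocks35 F (2 ^ m) k)
  /\ ((3 < k)%N -> is_3design (Uroots F (2 ^ m)) (blocks35 F (2 ^ m) k)).
Proof.
have pchar2 : 2 \in [pchar F] by apply: (@card_finPcharP _ _ (m * 2)); rewrite ?expnM.
split=> [a b c d stab | k_gt3]; first exact: blocks35_mobius.
split=> [B /blocks35_sub // | ].
have [B0 B0k] := hex.
have /card_gt2P [x [y [z [[xB0 yB0 zB0] xyz_neq]]]] : (2 < #|B0|)%N.
  by move: B0k; rewrite inE => /andP [/eqP -> _]; apply: ltnW.
pose T0 := [set x; y; z].
have sT0B0 : T0 \subset B0 by apply/subsetP => w; rewrite !inE => /orP [/orP [] |] /eqP ->.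
have sT0U := subset_trans sT0B0 (blocks35_sub B0k).
have cardT0 : #|T0| = 3%N by apply/eqP/cards3P; exists x, y, z.
exists #|[set B in blocks35 F (2 ^ m) k | T0 \subset B]|; split.
  by apply/card_gt0P; exists B0; rewrite inE B0k.
move=> T sTU cardT; apply/eqP.
by rewrite eqn_leq !(blocks35_count_le pchar2 hm hF).
Qed.
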